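(* Let $(\mathbb R/2\pi\mathbb Z)^3_{\rm reg}=\{(\alpha,\beta,\gamma)\in(\mathbb R/2\pi\mathbb Z)^3:\sin2\beta\neq0\}$. The map $$\Phi:(\mathbb R/2\pi\mathbb Z)^3_{\rm reg}\to\{a\in\mathcal A_2:|a|=1\}\setminus(\mathcal A_1e_2\cup\mathcal A_1),\qquad(\alpha,\beta,\gamma)\mapsto\exp(\alpha e_1)\exp(\beta e_1e_2)\exp(\gamma e_1)$$ is an eight-fold covering map.
   Context: $\mathcal A_2$ is the real associative algebra generated by $e_1,e_2$ with $e_1^2=e_2^2=-1$, $e_1e_2=-e_2e_1$, with Euclidean norm in the basis $1,e_1,e_2,e_1e_2$; $\exp x=\sum_{m\ge0}x^m/m!$. $\mathcal A_1=\mathbb R+\mathbb Re_1$, so $\mathcal A_1e_2=\mathbb Re_2+\mathbb Re_1e_2$. *)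

From HB Require Import structures.
From mathcomp Require Import all_boot all_order all_algebra generic_quotient.
From mathcomp Require Import all_classical all_reals all_analysis.
Set Implicit Arguments. Unset Strict Implicit. Unset Printing Implicit Defensive.
Import Order.TTheory GRing.Theory Num.Theory.
Import numFieldNormedType.Exports.
Local Open Scope classical_set_scope.
Local Open Scope ring_scope.

(* The algebra A_2 = R<e1,e2>/(e1^2=e2^2=-1, e1e2=-e2e1), realised on  *)
(* R^4 with coordinates in the basis (1, e1, e2, e1e2).                *)
Section A2.
Variable R : realType.

Local Notation A2 := 'rV[R]_4.

Definition mk4 (a b c d : R) : A2 := \row_(i < 4) [:: a; b; c; d]`_i.

Definition c0 (x : A2) : R := x ord0 (@Ordinal 4 0 isT).
Definition c1 (x : A2) : R := x ord0 (@Ordinal 4 1 isT).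
Definition c2 (x : A2) : R := x ord0 (@Ordinal 4 2 isT).
Definition c3 (x : A2) : R := x ord0 (@Ordinal 4 3 isT).

Definition one2 : A2 := mk4 1 0 0 0.
Definition e1 : A2 := mk4 0 1 0 0.
Definition e2 : A2 := mk4 0 0 1 0.
Definition e12 : A2 := mk4 0 0 0 1.

(* Product determined by the relations: e1^2 = e2^2 = (e1e2)^2 = -1,
   e1 e2 = e1e2, e2 (e1e2) = e1, (e1e2) e1 = e2 and anticommutation. *)
Definition mulA (x y : A2) : A2 :=
  let a0 := c0 x in let a1 := c1 x in let a2 := c2 x in let a3 := c3 x in
  let b0 := c0 y in let b1 := c1 y in let b2 := c2 y in let b3 := c3 y in
  mk4 (a0 * b0 - a1 * b1 - a2 * b2 - a3 * b3)
      (a0 * b1 + a1 * b0 + a2 * b3 - a3 * b2)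
      (a0 * b2 - a1 * b3 + a2 * b0 + a3 * b1)
      (a0 * b3 + a1 * b2 - a2 * b1 + a3 * b0).

Fixpoint powA (x : A2) (m : nat) : A2 :=
  if m is m'.+1 then mulA x (powA x m') else one2.

Definition expA (x : A2) : A2 :=
  limn (series (fun m : nat => (m`!%:R)^-1 *: powA x m)).

Definition normA (x : A2) : R :=
  Num.sqrt (c0 x ^+ 2 + c1 x ^+ 2 + c2 x ^+ 2 + c3 x ^+ 2).

Definition A1 : set A2 := [set a | exists x y : R, a = x *: one2 + y *: e1].
Definition A1e2 : set A2 := [set a | exists b, A1 b /\ a = mulA b e2].

Definition target : set A2 :=
  [set a | normA a = 1 /\ ~ (A1e2 a \/ A1 a)].

Definition mod2pi (x y : R) : bool :=
  `[< exists k : int, x - y = k%:~R * (2 * pi) >].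

Lemma mod2pi_refl : reflexive mod2pi.
Proof.
move=> x; apply/asboolP; exists 0; by rewrite subrr mul0r.
Qed.

Lemma mod2pi_sym : symmetric mod2pi.
Proof.
move=> x y; apply/asboolP/asboolP => -[k hk]; exists (- k);
  by rewrite mulrNz mulNr -hk opprB.
Qed.

Lemma mod2pi_trans : transitive mod2pi.
Proof.
move=> y x z /asboolP[k hk] /asboolP[l hl]; apply/asboolP; exists (k + l).
by rewrite mulrzDr mulrDl -hk -hl addrA subrK.
Qed.

Local Open Scope quotient_scope.
Definition mod2pi_equiv := EquivRel mod2pi mod2pi_refl mod2pi_sym mod2pi_trans.

Definition circle : topologicalType :=
  quotient_topology {eq_quot mod2pi_equiv}.

Definition torus3 : topologicalType := (circle * circle * circle)%type.

Definition ang (t : circle) : R := repr t.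

Definition torus_reg : set torus3 :=
  [set t | sin (2 * ang t.1.2) != 0].

(* Phi(alpha, beta, gamma) = exp(alpha e1) exp(beta e1e2) exp(gamma e1),
   computed on representatives (well defined by 2 pi-periodicity). *)
Definition Phi (t : torus3) : A2 :=
  mulA (mulA (expA (ang t.1.1 *: e1)) (expA (ang t.1.2 *: e12)))
       (expA (ang t.2 *: e1)).

End A2.

Definition n_fold_covering (n : nat) (E B : topologicalType) (p : E -> B) : Prop :=
  continuous p /\
  forall b : B, exists U : set B, open U /\ U b /\
    exists V : 'I_n -> set E,
      (forall i, open (V i)) /\
      (forall i j, i != j -> V i `&` V j = set0) /\
      p @^-1` U = \bigcup_i V i /\
      (forall i, exists s : B -> E,
          {within U, continuous s} /\
          (forall y, U y -> V i (s y) /\ p (s y) = y) /\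
          (forall x, V i x -> s (p x) = x)).

(* Write a = z + w e2 with z = c0 + c1 e1 and w = c2 + c3 e1 in A_1 = C.  Then
   Phi (alpha, beta, gamma) has z = cos beta exp ((alpha + gamma) e1) and
   w = e1 sin beta exp ((alpha - gamma) e1), and a unit vector lies outside
   A_1 e2 u A_1 exactly when z and w are both nonzero.  Near a point of the
   target, fix continuous branches of arg z and arg w.  A preimage is then
   determined by the signs of cos beta and sin beta, which fix beta,
   alpha + gamma and alpha - gamma modulo 2 pi, together with the sign of
   cos (alpha - (alpha + gamma + alpha - gamma) / 2) = +-1, which fixes alpha
   modulo 2 pi.  These eight sign patterns cut out eight disjoint open sheets,
   each mapped homeomorphically onto the neighbourhood by Phi. *)

From Pilot Require Import Defs.
From HB Require Import structures.
From mathcomp Require Import all_boot all_order all_algebra generic_quotient.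
From mathcomp Require Import all_classical all_reals all_analysis.
From mathcomp Require Import ring lra.
Import Order.TTheory GRing.Theory Num.Theory.
Import numFieldNormedType.Exports.
Local Open Scope classical_set_scope.
Local Open Scope ring_scope.
Local Open Scope quotient_scope.

Local Notation mulA := Defs.mulA.

Section Coordinates.
Context {R : realType}.
Local Notation A2 := 'rV[R]_4.
Implicit Types (u : A2) (a b c d s : R).

Lemma c0_mk4 a b c d : c0 (mk4 a b c d) = a. Proof. by rewrite /c0 /mk4 mxE. Qed.
Lemma c1_mk4 a b c d : c1 (mk4 a b c d) = b. Proof. by rewrite /c1 /mk4 mxE. Qed.
Lemma c2_mk4 a b c d : c2 (mk4 a b c d) = c. Proof. by rewrite /c2 /mk4 mxE. Qed.
Lemma c3_mk4 a b c d : c3 (mk4 a b c d) = d. Proof. by rewrite /c3 /mk4 mxE. Qed.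

Lemma mk4E u : u = mk4 (c0 u) (c1 u) (c2 u) (c3 u).
Proof.
apply/rowP => i; rewrite /mk4 mxE /c0 /c1 /c2 /c3.
case: i => [[|[|[|[|k]]]] Hk] //=; rewrite (ord1 ord0);
  by congr (u _ _); apply: val_inj.
Qed.

Lemma mk4D a b c d a' b' c' d' :
  mk4 a b c d + mk4 a' b' c' d' = mk4 (a + a') (b + b') (c + c') (d + d').
Proof. by apply/rowP => i; rewrite !mxE; case: i => [[|[|[|[|k]]]] Hk]. Qed.

Lemma mk4N a b c d : - mk4 a b c d = mk4 (- a) (- b) (- c) (- d).
Proof. by apply/rowP => i; rewrite !mxE; case: i => [[|[|[|[|k]]]] Hk]. Qed.

Lemma mk4Z s a b c d : s *: mk4 a b c d = mk4 (s * a) (s * b) (s * c) (s * d).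
Proof. by apply/rowP => i; rewrite !mxE; case: i => [[|[|[|[|k]]]] Hk]. Qed.

Lemma mulA_mk4 a0 a1 a2 a3 b0 b1 b2 b3 :
  mulA (mk4 a0 a1 a2 a3) (mk4 b0 b1 b2 b3) =
  mk4 (a0 * b0 - a1 * b1 - a2 * b2 - a3 * b3)
      (a0 * b1 + a1 * b0 + a2 * b3 - a3 * b2)
      (a0 * b2 - a1 * b3 + a2 * b0 + a3 * b1)
      (a0 * b3 + a1 * b2 - a2 * b1 + a3 * b0).
Proof. by rewrite /mulA !c0_mk4 !c1_mk4 !c2_mk4 !c3_mk4. Qed.

Lemma mulA_scale_comb u a c s :
  mulA (a *: u) (c *: one2 R + s *: u) = (a * c) *: u + (a * s) *: mulA u u.
Proof.
rewrite [u]mk4E /one2 !mk4Z !mk4D ?mulA_mk4 !c0_mk4 !c1_mk4 !c2_mk4 !c3_mk4 ?mk4Z ?mk4D.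
by congr mk4; ring.
Qed.

Lemma mulA_e1_e1 : mulA (e1 R) (e1 R) = - one2 R.
Proof. by rewrite mulA_mk4 /one2 mk4N; congr mk4; ring. Qed.

Lemma mulA_e12_e12 : mulA (e12 R) (e12 R) = - one2 R.
Proof. by rewrite mulA_mk4 /one2 mk4N; congr mk4; ring. Qed.

End Coordinates.

Section Euler.
Context {R : realType}.
Local Notation A2 := 'rV[R]_4.
Implicit Types (u : A2) (a : R).

Definition cos_term a m := (~~ odd m)%:R * (-1) ^+ m./2 * a ^+ m.
Definition sin_term a m := (odd m)%:R * (-1) ^+ m.-1./2 * a ^+ m.

Lemma cos_termS a m : cos_term a m.+1 = - (a * sin_term a m).
Proof.
rewrite /cos_term /sin_term /=; case: (boolP (odd m)) => om /=; last first.
  by rewrite !mul0r mulr0 oppr0.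
have -> : m = (m./2).*2.+1 by rewrite -[in LHS](odd_double_half m) om.
by move: (m./2) => k /=; rewrite (half_bit_double k false) exprS [a ^+ _.+2]exprS; ring.
Qed.

Lemma sin_termS a m : sin_term a m.+1 = a * cos_term a m.
Proof. by rewrite /cos_term /sin_term /= exprS; ring. Qed.

Lemma cos_coeff_term a m : cos_coeff a m = (m`!%:R)^-1 * cos_term a m.
Proof. by rewrite /cos_coeff /cos_term /= -exprnP; ring. Qed.

Lemma sin_coeff_term a m : sin_coeff a m = (m`!%:R)^-1 * sin_term a m.
Proof. by rewrite /sin_coeff /sin_term /=; ring. Qed.

Lemma powA_sqrt_m1 u a m : mulA u u = - one2 R ->
  powA (a *: u) m = cos_term a m *: one2 R + sin_term a m *: u.
Proof.
move=> uu; elim: m => [|m IH] /=.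
  by rewrite /cos_term /sin_term /= !expr0 !mulr1 scale1r scale0r addr0.
by rewrite IH mulA_scale_comb uu scalerN -scaleNr cos_termS sin_termS addrC.
Qed.

Lemma expA_sqrt_m1 u a : mulA u u = - one2 R ->
  expA (a *: u) = cos a *: one2 R + sin a *: u.
Proof.
move=> uu; rewrite /expA; apply: cvg_lim => //.
have cvg_cos : series (cos_coeff a) @ \oo --> cos a.
  by rewrite unlock; exact: is_cvg_series_cos_coeff.
have cvg_sin : series (sin_coeff a) @ \oo --> sin a.
  by rewrite unlock; exact: is_cvg_series_sin_coeff.
have -> : series (fun m => (m`!%:R)^-1 *: powA (a *: u) m) =
    (fun n => series (cos_coeff a) n *: one2 R + series (sin_coeff a) n *: u).
  apply/funext => n; rewrite /series /= !scaler_suml -big_split /=.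
  apply: eq_bigr => m _.
  by rewrite powA_sqrt_m1 // scalerDr !scalerA cos_coeff_term sin_coeff_term.
by apply: cvgD; apply: cvgZ => //; exact: cvg_cst.
Qed.

Lemma expA_e1 a : expA (a *: e1 R) = mk4 (cos a) (sin a) 0 0.
Proof. by rewrite expA_sqrt_m1 ?mulA_e1_e1 // /one2 /e1 !mk4Z mk4D; congr mk4; ring. Qed.

Lemma expA_e12 a : expA (a *: e12 R) = mk4 (cos a) 0 0 (sin a).
Proof. by rewrite expA_sqrt_m1 ?mulA_e12_e12 // /one2 /e12 !mk4Z mk4D; congr mk4; ring. Qed.

End Euler.

Section Circle.
Context {R : realType}.
Local Notation pi := (@pi R).
Local Notation piC := (\pi_(circle R)).
Implicit Types x y : R.

Lemma cos_2pi : cos (2 * pi) = 1.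
Proof. by rewrite mulrC mulr_natr cos2pi. Qed.

Lemma sin_2pi : sin (2 * pi) = 0.
Proof. by rewrite mulrC mulr_natr sin2pi. Qed.

Lemma sin2x (b : R) : sin (2 * b) = 2 * (sin b * cos b).
Proof. by rewrite mulrC mulr_natr sin_mulr2n mulr_natl mulrC. Qed.

Lemma cos_sin_int2pi (k : int) :
  cos (k%:~R * (2 * pi)) = 1 /\ sin (k%:~R * (2 * pi)) = 0.
Proof.
have nat2pi (n : nat) : cos (n%:R * (2 * pi)) = 1 /\ sin (n%:R * (2 * pi)) = 0.
  elim: n => [|n [cn sn]]; first by rewrite mul0r cos0 sin0.
  by rewrite -addn1 natrD mulrDl mul1r cosD sinD cn sn cos_2pi sin_2pi; split; ring.
case: k => n; first exact: nat2pi.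
by rewrite NegzE mulrNz mulNr cosN sinN; have [-> ->] := nat2pi n.+1; rewrite oppr0.
Qed.

Lemma mod2pi_cos_sin {x y} : mod2pi x y -> cos x = cos y /\ sin x = sin y.
Proof.
move=> /asboolP [k hk]; have -> : x = y + k%:~R * (2 * pi) by rewrite -hk; ring.
by rewrite cosD sinD; have [-> ->] := cos_sin_int2pi k; split; ring.
Qed.

Lemma cos_eq1_mod2pi x : cos x = 1 -> mod2pi x 0.
Proof.
move=> cx; have pi_gt0 := pi_gt0 R; apply/asboolP.
set k := Num.floor (x / (2 * pi)); exists k; rewrite subr0.
have := floor_itv (x / (2 * pi)); rewrite -/k => /andP [kx xk].
have {}kx : k%:~R * (2 * pi) <= x by rewrite -ler_pdivlMr ?mulr_gt0.
have {}xk : x < (k + 1)%:~R * (2 * pi) by rewrite -ltr_pdivrMr ?mulr_gt0.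
rewrite intrD mulrDl mul1r in xk.
set r := x - k%:~R * (2 * pi).
have r_ge0 : 0 <= r by rewrite /r; lra.
have r_lt2pi : r < 2 * pi by rewrite /r; lra.
have cr : cos r = 1 by rewrite /r cosB; have [-> ->] := cos_sin_int2pi k; rewrite cx; ring.
suff : r = 0 by move/eqP; rewrite subr_eq0 => /eqP.
have [rpi|pir] := leP r pi.
  by apply: (@cos_inj R); rewrite ?in_itv /= ?lexx ?pi_ge0 ?cos0 //; apply/andP; split; lra.
suff : 2 * pi - r = 0 by lra.
apply: (@cos_inj R); rewrite ?in_itv /= ?lexx ?pi_ge0 ?cos0 //.
- by apply/andP; split; lra.
- by rewrite cosB cos_2pi sin_2pi cr; ring.
Qed.

Lemma cos_sin_mod2pi x y : cos x = cos y -> sin x = sin y -> mod2pi x y.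
Proof.
move=> cxy sxy; have : cos (x - y) = 1 by rewrite cosB cxy sxy -!expr2 cos2Dsin2.
by move/cos_eq1_mod2pi/asboolP => [k hk]; apply/asboolP; exists k; rewrite -hk subr0.
Qed.

Lemma mod2piD {x y x' y'} : mod2pi x x' -> mod2pi y y' -> mod2pi (x + y) (x' + y').
Proof.
move=> /asboolP [k hk] /asboolP [l hl]; apply/asboolP; exists (k + l).
by rewrite intrD mulrDl -hk -hl; ring.
Qed.

Lemma mod2piN {x y} : mod2pi x y -> mod2pi (- x) (- y).
Proof.
move=> /asboolP [k hk]; apply/asboolP; exists (- k).
by rewrite mulrNz mulNr -hk; ring.
Qed.

Lemma mod2piB {x y x' y'} : mod2pi x x' -> mod2pi y y' -> mod2pi (x - y) (x' - y').
Proof. by move=> hx /mod2piN; exact: mod2piD. Qed.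

Lemma cosD_halfturn x (b : bool) : cos (x + b%:R * pi) = (-1) ^+ b * cos x.
Proof.
by case: b => /=; rewrite ?(mulr0n, mulr1n, mul0r, mul1r, addr0, expr0, expr1, cosDpi, mulN1r).
Qed.

Lemma sinD_halfturn x (b : bool) : sin (x + b%:R * pi) = (-1) ^+ b * sin x.
Proof.
by case: b => /=; rewrite ?(mulr0n, mulr1n, mul0r, mul1r, addr0, expr0, expr1, sinDpi, mulN1r).
Qed.

Lemma cosB_halfturn x (b : bool) : cos (x - b%:R * pi) = (-1) ^+ b * cos x.
Proof. by rewrite -cosN opprB addrC cosD_halfturn cosN. Qed.

Lemma fullturn_mod2pi (b : bool) : mod2pi (2 * (b%:R * pi)) 0.
Proof.
apply: cos_sin_mod2pi; case: b => /=;
  by rewrite ?(mulr0n, mulr1n, mul0r, mul1r, mulr0, cos_2pi, sin_2pi, cos0, sin0).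
Qed.

Lemma mod2pi_sub0 x y : mod2pi (x - y) 0 = mod2pi x y.
Proof. by rewrite /mod2pi subr0. Qed.

Lemma piC_mod2pi x y : (piC x = piC y) = mod2pi x y.
Proof. by apply/propext; split => /(eqmodP (mod2pi_equiv R)). Qed.

Lemma ang_mod2pi x : mod2pi (ang (piC x)) x.
Proof. by rewrite -piC_mod2pi /ang reprK. Qed.

Lemma cos_ang x : cos (ang (piC x)) = cos x.
Proof. exact: proj1 (mod2pi_cos_sin (ang_mod2pi x)). Qed.

Lemma sin_ang x : sin (ang (piC x)) = sin x.
Proof. exact: proj2 (mod2pi_cos_sin (ang_mod2pi x)). Qed.

Lemma torus_reprE (t : torus3 R) : t = (piC (ang t.1.1), piC (ang t.1.2), piC (ang t.2)).
Proof. by rewrite /ang !reprK; case: t => [[]]. Qed.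

Lemma continuous_cos_ang : continuous (fun t : circle R => cos (ang t)).
Proof.
apply: (@repr_comp_continuous _ _ _ (@cos R)); first exact: continuous_cos.
by move=> x y /eqP; rewrite piC_mod2pi => /mod2pi_cos_sin [-> _].
Qed.

Lemma continuous_sin_ang : continuous (fun t : circle R => sin (ang t)).
Proof.
apply: (@repr_comp_continuous _ _ _ (@sin R)); first exact: continuous_sin.
by move=> x y /eqP; rewrite piC_mod2pi => /mod2pi_cos_sin [_ ->].
Qed.

Lemma continuous_alpha : continuous (fun t : torus3 R => t.1.1).
Proof. by move=> t; apply: continuous_comp; exact: cvg_fst. Qed.

Lemma continuous_beta : continuous (fun t : torus3 R => t.1.2).
Proof. by move=> t; apply: continuous_comp; [exact: cvg_fst | exact: cvg_snd]. Qed.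

Lemma continuous_gamma : continuous (fun t : torus3 R => t.2).
Proof. by move=> t; exact: cvg_snd. Qed.

End Circle.

Section Continuity.
Context {R : realType} {X : topologicalType}.

Lemma continuous_cos_ang_comp {p : X -> circle R} {x} :
  {for x, continuous p} -> {for x, continuous (fun y => cos (ang (p y)))}.
Proof. exact: (@continuous_comp _ _ _ p (fun t => cos (ang t)) x ^~ (continuous_cos_ang _)). Qed.

Lemma continuous_sin_ang_comp {p : X -> circle R} {x} :
  {for x, continuous p} -> {for x, continuous (fun y => sin (ang (p y)))}.
Proof. exact: (@continuous_comp _ _ _ p (fun t => sin (ang t)) x ^~ (continuous_sin_ang _)). Qed.

Lemma mk4_continuous (f0 f1 f2 f3 : X -> R) x :
  {for x, continuous f0} -> {for x, continuous f1} ->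
  {for x, continuous f2} -> {for x, continuous f3} ->
  {for x, continuous (fun y => mk4 (f0 y) (f1 y) (f2 y) (f3 y))}.
Proof.
move=> h0 h1 h2 h3.
have -> : (fun y => mk4 (f0 y) (f1 y) (f2 y) (f3 y)) =
    (fun y => f0 y *: one2 R + f1 y *: e1 R + f2 y *: e2 R + f3 y *: e12 R).
  by apply/funext => y; rewrite /one2 /e1 /e2 /e12 !mk4Z !mk4D; congr mk4; ring.
apply: continuousD; [apply: continuousD; [apply: continuousD|]|];
  by apply: continuousZ => //; exact: cst_continuous.
Qed.

Lemma continuous_at_set_type {T : topologicalType} (A : set T) (f : X -> set_type A) x :
  {for x, continuous (fun y => set_val (f y))} -> {for x, continuous f}.
Proof.
move=> hf W; rewrite nbhsE => -[U [[B oB UB] Ufx UW]].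
have Bfx : nbhs (set_val (f x)) B.
  by apply: open_nbhs_nbhs; split => //; move: Ufx; rewrite -UB.
have := hf _ Bfx; rewrite nbhs_simpl /=.
by apply: filterS => y /= By; apply: UW; rewrite -UB.
Qed.

Lemma near_pos_continuous {f : X -> R} {x} :
  {for x, continuous f} -> 0 < f x -> \forall y \near x, 0 < f y.
Proof.
move=> cf fx; have pos : nbhs (f x) [set y : R | 0 < y].
  by apply: open_nbhs_nbhs; split => //; exact: open_gt.
exact: (cf _ pos).
Qed.

Lemma continuous_sqr (f : X -> R) x :
  {for x, continuous f} -> {for x, continuous (fun y => f y ^+ 2)}.
Proof. by move=> cf; rewrite /GRing.exp /=; exact: continuousM. Qed.

Lemma continuous_pair {Y Z : topologicalType} (f : X -> Y) (g : X -> Z) x :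
  {for x, continuous f} -> {for x, continuous g} ->
  {for x, continuous (fun y => (f y, g y))}.
Proof. exact: cvg_pair. Qed.

Lemma continuous_set_val {T : topologicalType} {A : set T} :
  continuous (set_val : set_type A -> T).
Proof. exact: initial_continuous. Qed.

End Continuity.

Section PhiAngles.
Context {R : realType}.
Local Notation A2 := 'rV[R]_4.
Implicit Types (a b g : R) (v : A2).

Definition Phi_angles a b g : A2 :=
  mk4 (cos b * cos (a + g)) (cos b * sin (a + g))
      (- (sin b * sin (a - g))) (sin b * cos (a - g)).

Lemma PhiE (t : torus3 R) : Phi t = Phi_angles (ang t.1.1) (ang t.1.2) (ang t.2).
Proof.
rewrite /Phi !expA_e1 expA_e12 !mulA_mk4 /Phi_angles cosD sinD cosB sinB.
by congr mk4; ring.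
Qed.

Lemma Phi_angles_mod2pi {a b g a' b' g'} :
  mod2pi a a' -> mod2pi b b' -> mod2pi g g' -> Phi_angles a b g = Phi_angles a' b' g'.
Proof.
move=> ha hb hg; have [cD sD] := mod2pi_cos_sin (mod2piD ha hg).
have [cB sB] := mod2pi_cos_sin (mod2piB ha hg); have [cb sb] := mod2pi_cos_sin hb.
by rewrite /Phi_angles cD sD cB sB cb sb.
Qed.

Lemma normA_Phi_angles a b g : normA (Phi_angles a b g) = 1.
Proof.
rewrite /normA /Phi_angles c0_mk4 c1_mk4 c2_mk4 c3_mk4.
have -> : (cos b * cos (a + g)) ^+ 2 + (cos b * sin (a + g)) ^+ 2 +
    (- (sin b * sin (a - g))) ^+ 2 + (sin b * cos (a - g)) ^+ 2 =
  cos b ^+ 2 * (cos (a + g) ^+ 2 + sin (a + g) ^+ 2) +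
  sin b ^+ 2 * (cos (a - g) ^+ 2 + sin (a - g) ^+ 2) by ring.
by rewrite !cos2Dsin2 !mulr1 cos2Dsin2 sqrtr1.
Qed.

Lemma A1_c2_c3 v : A1 v -> c2 v = 0 /\ c3 v = 0.
Proof. by move=> [x [y ->]]; rewrite /one2 /e1 !mk4Z mk4D c2_mk4 c3_mk4; split; ring. Qed.

Lemma A1e2_c0_c1 v : A1e2 v -> c0 v = 0 /\ c1 v = 0.
Proof.
move=> [_ [[x [y ->]] ->]].
by rewrite /one2 /e1 /e2 !mk4Z mk4D mulA_mk4 c0_mk4 c1_mk4; split; ring.
Qed.

Lemma Phi_angles_target a b g : sin (2 * b) != 0 -> target (Phi_angles a b g).
Proof.
rewrite sin2x => hb; split; first exact: normA_Phi_angles.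
have cb : cos b != 0 by apply: contra hb => /eqP ->; rewrite !mulr0.
have sb : sin b != 0 by apply: contra hb => /eqP ->; rewrite !mul0r mulr0.
case=> [/A1e2_c0_c1|/A1_c2_c3]; rewrite /Phi_angles ?c0_mk4 ?c1_mk4 ?c2_mk4 ?c3_mk4.
  move=> [h0 h1]; have : cos b ^+ 2 * (cos (a + g) ^+ 2 + sin (a + g) ^+ 2) = 0.
    by rewrite mulrDr -!exprMn h0 h1 expr0n /= addr0.
  by rewrite cos2Dsin2 mulr1 => /eqP; rewrite expf_eq0 /= (negbTE cb).
move=> [h2 h3]; have : sin b ^+ 2 * (cos (a - g) ^+ 2 + sin (a - g) ^+ 2) = 0.
  have {}h2 : sin b * sin (a - g) = 0 by rewrite -[LHS]opprK h2 oppr0.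
  by rewrite mulrDr -!exprMn h2 h3 expr0n /= addr0.
by rewrite cos2Dsin2 mulr1 => /eqP; rewrite expf_eq0 /= (negbTE sb).
Qed.

Lemma Phi_target (t : torus3 R) : torus_reg t -> target (Phi t).
Proof. by rewrite PhiE => h; apply: Phi_angles_target. Qed.

Lemma continuous_Phi : continuous (@Phi R).
Proof.
have -> : @Phi R = fun t =>
    mk4 (cos (ang t.1.2) * (cos (ang t.1.1) * cos (ang t.2) - sin (ang t.1.1) * sin (ang t.2)))
        (cos (ang t.1.2) * (sin (ang t.1.1) * cos (ang t.2) + cos (ang t.1.1) * sin (ang t.2)))
        (- (sin (ang t.1.2) * (sin (ang t.1.1) * cos (ang t.2) - cos (ang t.1.1) * sin (ang t.2))))
        (sin (ang t.1.2) * (cos (ang t.1.1) * cos (ang t.2) + sin (ang t.1.1) * sin (ang t.2))).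
  by apply/funext => t; rewrite PhiE /Phi_angles cosD sinD cosB sinB.
move=> t; apply: (@mk4_continuous R (torus3 R)); repeat first
  [ apply: continuousM | apply: continuousD | apply: continuousN
  | apply: continuous_cos_ang_comp | apply: continuous_sin_ang_comp
  | exact: continuous_alpha | exact: continuous_beta | exact: continuous_gamma ].
Qed.

Definition Phi_reg (t : set_type (@torus_reg R)) : set_type (@target R) :=
  exist _ (Phi (set_val t)) (mem_set (Phi_target _ (set_valP t))).

Lemma continuous_Phi_reg : continuous Phi_reg.
Proof.
move=> t; apply: continuous_at_set_type.
apply: (continuous_comp _ (continuous_Phi _)); exact: initial_continuous.
Qed.

End PhiAngles.

Section ArgChart.
Context {R : realType}.
Local Notation pi := (@pi R).
Implicit Types (th x y : R).

(* Rotated by -th, the point (x, y) lies in the right half-plane, where the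
   arctangent of the slope is its argument. *)
Definition arg_chart th x y : R :=
  th + atan ((cos th * y - sin th * x) / (cos th * x + sin th * y)).

Lemma arg_chart_cos_sin th x y : 0 < cos th * x + sin th * y ->
  cos (arg_chart th x y) * Num.sqrt (x ^+ 2 + y ^+ 2) = x /\
  sin (arg_chart th x y) * Num.sqrt (x ^+ 2 + y ^+ 2) = y.
Proof.
set p := cos th * x + sin th * y; set d := cos th * y - sin th * x => p_gt0.
have cs := cos2Dsin2 th; set r := Num.sqrt (x ^+ 2 + y ^+ 2).
have pd : p ^+ 2 + d ^+ 2 = x ^+ 2 + y ^+ 2.
  have -> : p ^+ 2 + d ^+ 2 = (cos th ^+ 2 + sin th ^+ 2) * (x ^+ 2 + y ^+ 2).
    by rewrite /p /d; ring.
  by rewrite cs mul1r.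
have rr : r ^+ 2 = x ^+ 2 + y ^+ 2 by rewrite sqr_sqrtr // addr_ge0 // sqr_ge0.
have r_gt0 : 0 < r.
  by rewrite sqrtr_gt0 -pd ltr_wpDr ?sqr_ge0 // exprn_gt0.
have p0 : p != 0 by rewrite gt_eqF.
have r0 : r != 0 by rewrite gt_eqF.
have sqrt_tan : Num.sqrt (1 + (d / p) ^+ 2) = r / p.
  have -> : 1 + (d / p) ^+ 2 = (r / p) ^+ 2 by rewrite !expr_div_n rr -pd; field.
  by rewrite sqrtr_sqr ger0_norm // divr_ge0 // ltW.
have c_atan : cos (atan (d / p)) = p / r by rewrite cos_atan sqrt_tan invf_div.
have s_atan : sin (atan (d / p)) = d / r.
  have c_neq0 : cos (atan (d / p)) != 0 by rewrite c_atan mulf_neq0 // invr_eq0.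
  have := atanK (d / p); rewrite /tan => h.
  by rewrite -[LHS](divfK c_neq0) h c_atan mulrA divfK.
rewrite /arg_chart -/p -/d cosD sinD c_atan s_atan; split.
  have -> : (cos th * (p / r) - sin th * (d / r)) * r = (cos th ^+ 2 + sin th ^+ 2) * x.
    by rewrite /p /d; field.
  by rewrite cs mul1r.
have -> : (sin th * (p / r) + cos th * (d / r)) * r = (cos th ^+ 2 + sin th ^+ 2) * y.
  by rewrite /p /d; field.
by rewrite cs mul1r.
Qed.

Lemma exists_arg_chart x y : ~ (x = 0 /\ y = 0) -> exists th, 0 < cos th * x + sin th * y.
Proof.
move=> xy0; have [x_gt0|x_lt0|x0] := ltgtP 0 x.
- by exists 0; rewrite cos0 sin0 mul1r mul0r addr0.
- by exists pi; rewrite cospi sinpi mul0r addr0 mulN1r oppr_gt0.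
have [y_gt0|y_lt0|y0] := ltgtP 0 y; last by exfalso; apply: xy0.
- by exists (pi / 2); rewrite cos_pihalf sin_pihalf mul0r add0r mul1r.
- exists (- (pi / 2)).
  by rewrite cosN sinN cos_pihalf sin_pihalf mul0r add0r mulN1r oppr_gt0.
Qed.

Lemma continuous_arg_chart {X : topologicalType} th (fx fy : X -> R) (t : X) :
  {for t, continuous fx} -> {for t, continuous fy} ->
  0 < cos th * fx t + sin th * fy t ->
  {for t, continuous (fun s => arg_chart th (fx s) (fy s))}.
Proof.
move=> cx cy p_gt0; rewrite /arg_chart; apply: continuousD; first exact: cst_continuous.
apply: (@continuous_comp _ _ _
  (fun s => (cos th * fy s - sin th * fx s) / (cos th * fx s + sin th * fy s)) atan t);
  last exact: continuous_atan.
apply: continuousM.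
  by apply: continuousD; [|apply: continuousN]; apply: continuousM => //; exact: cst_continuous.
apply: continuousV; first by rewrite gt_eqF.
by apply: continuousD; apply: continuousM => //; exact: cst_continuous.
Qed.

End ArgChart.

Section Signs.
Context {R : realType}.

Lemma eq_sign_sqr (b : bool) (c r : R) :
  0 < (-1) ^+ b * c -> c ^+ 2 = r ^+ 2 -> 0 < r -> c = (-1) ^+ b * r.
Proof.
move=> c_pos cr r_gt0; have : (c - r) * (c + r) = 0 by rewrite -subr_sqr cr subrr.
by move/eqP; rewrite mulf_eq0 mulr_sign; case: b c_pos => /= c_pos /orP [] /eqP; lra.
Qed.

Lemma mulI_sign {b : bool} {r c x : R} :
  r != 0 -> (-1) ^+ b * r * c = x * r -> c = (-1) ^+ b * x.
Proof. by rewrite !mulr_sign; case: b => r0 h; apply: (mulIf r0); lra. Qed.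

Lemma sign_pos {c : R} : c != 0 -> 0 < (-1) ^+ (c < 0)%R * c.
Proof. by rewrite -normrEsign normr_gt0. Qed.

Lemma sign_unique {b b' : bool} {c : R} :
  0 < (-1) ^+ b * c -> 0 < (-1) ^+ b' * c -> b = b'.
Proof. by rewrite !mulr_sign; case: b; case: b' => // h1 h2; lra. Qed.

End Signs.

Section Solutions.
Context {R : realType}.
Local Notation pi := (@pi R).
Local Notation A2 := 'rV[R]_4.
Implicit Types v : A2.

Definition norm_z v : R := Num.sqrt (c0 v ^+ 2 + c1 v ^+ 2).
Definition norm_w v : R := Num.sqrt (c2 v ^+ 2 + c3 v ^+ 2).

Lemma sqr_add_eq0 (x y : R) : x ^+ 2 + y ^+ 2 = 0 -> x = 0 /\ y = 0.
Proof.
move=> h; have x2 : x ^+ 2 = 0 by have := sqr_ge0 x; have := sqr_ge0 y; lra.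
have y2 : y ^+ 2 = 0 by rewrite x2 add0r in h.
by split; apply/eqP; rewrite -sqrf_eq0; apply/eqP.
Qed.

Lemma target_norms {v} : target v ->
  [/\ 0 < norm_z v, 0 < norm_w v & norm_z v ^+ 2 + norm_w v ^+ 2 = 1].
Proof.
move=> [nv v_notin].
have z_ge0 : 0 <= c0 v ^+ 2 + c1 v ^+ 2 by rewrite addr_ge0 // sqr_ge0.
have w_ge0 : 0 <= c2 v ^+ 2 + c3 v ^+ 2 by rewrite addr_ge0 // sqr_ge0.
split.
- rewrite sqrtr_gt0 lt_def z_ge0 andbT; apply/negP => /eqP/sqr_add_eq0 [v0 v1].
  apply: v_notin; left; exists (c2 v *: one2 R + c3 v *: e1 R); split.
    by exists (c2 v), (c3 v).
  rewrite /one2 /e1 /e2 !mk4Z mk4D mulA_mk4 {1}[v]mk4E v0 v1; congr mk4; ring.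
- rewrite sqrtr_gt0 lt_def w_ge0 andbT; apply/negP => /eqP/sqr_add_eq0 [v2 v3].
  apply: v_notin; right; exists (c0 v), (c1 v).
  rewrite /one2 /e1 !mk4Z mk4D {1}[v]mk4E v2 v3; congr mk4; ring.
- rewrite /norm_z /norm_w !sqr_sqrtr //.
  move: nv; rewrite /normA => /(congr1 (fun x => x ^+ 2)).
  by rewrite sqr_sqrtr ?expr1n ?addr_ge0 ?sqr_ge0 // => <-; ring.
Qed.

Definition beta_base v : R := arg_chart 0 (norm_z v) (norm_w v).

Definition sol_beta (b1 b2 : bool) v : R :=
  b1%:R * pi + (-1) ^+ (b1 (+) b2) * beta_base v.

Lemma cos_sin_beta_base v : target v ->
  cos (beta_base v) = norm_z v /\ sin (beta_base v) = norm_w v.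
Proof.
move=> /target_norms [z_gt0 w_gt0 zw1].
have := @arg_chart_cos_sin R 0 (norm_z v) (norm_w v).
by rewrite cos0 sin0 mul1r mul0r addr0 zw1 sqrtr1 !mulr1; apply.
Qed.

Lemma cos_sin_sol_beta b1 b2 {v} : target v ->
  cos (sol_beta b1 b2 v) = (-1) ^+ b1 * norm_z v /\
  sin (sol_beta b1 b2 v) = (-1) ^+ b2 * norm_w v.
Proof.
move=> /cos_sin_beta_base [cb sb].
rewrite /sol_beta addrC cosD_halfturn sinD_halfturn !mulr_sign.
by case: b1; case: b2 => /=; rewrite ?cosN ?sinN cb sb ?opprK.
Qed.

Definition proj_z th v : R := cos th * c0 v + sin th * c1 v.
Definition proj_w th v : R := cos th * c3 v + sin th * - c2 v.
Definition arg_z th v : R := arg_chart th (c0 v) (c1 v).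
Definition arg_w th v : R := arg_chart th (c3 v) (- c2 v).

Lemma cos_sin_arg_z {th v} : 0 < proj_z th v ->
  cos (arg_z th v) * norm_z v = c0 v /\ sin (arg_z th v) * norm_z v = c1 v.
Proof. exact: arg_chart_cos_sin. Qed.

Lemma cos_sin_arg_w {th v} : 0 < proj_w th v ->
  cos (arg_w th v) * norm_w v = c3 v /\ sin (arg_w th v) * norm_w v = - c2 v.
Proof.
by move=> p_gt0; rewrite /norm_w addrC -(sqrrN (c2 v)); exact: arg_chart_cos_sin.
Qed.

Variables (thz thw : R) (b1 b2 e : bool).

Definition sum_angle v : R := arg_z thz v + b1%:R * pi.
Definition diff_angle v : R := arg_w thw v + b2%:R * pi.
Definition mid_angle v : R := (sum_angle v + diff_angle v) / 2.
Definition sol_alpha v : R := mid_angle v + e%:R * pi.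
Definition sol_gamma v : R := (sum_angle v - diff_angle v) / 2 + e%:R * pi.

Lemma Phi_angles_sol {v} : target v -> 0 < proj_z thz v -> 0 < proj_w thw v ->
  Phi_angles (sol_alpha v) (sol_beta b1 b2 v) (sol_gamma v) = v.
Proof.
move=> tv hz hw; have [cb sb] := cos_sin_sol_beta b1 b2 tv.
have [cz sz] := cos_sin_arg_z hz; have [cw sw] := cos_sin_arg_w hw.
have [c2e s2e] := mod2pi_cos_sin (fullturn_mod2pi (R := R) e).
rewrite /Phi_angles.
have -> : sol_alpha v + sol_gamma v = sum_angle v + 2 * (e%:R * pi).
  by rewrite /sol_alpha /sol_gamma /mid_angle; field.
have -> : sol_alpha v - sol_gamma v = diff_angle v.
  by rewrite /sol_alpha /sol_gamma /mid_angle; field.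
rewrite cosD sinD c2e s2e cos0 sin0 /sum_angle /diff_angle.
rewrite !cosD_halfturn !sinD_halfturn cb sb [RHS]mk4E -cz -sz -cw.
have -> : c2 v = - (sin (arg_w thw v) * norm_w v) by rewrite sw opprK.
have s1 := sqrr_sign R b1; have s2 := sqrr_sign R b2.
congr mk4; [rewrite -[RHS]mul1r -[in RHS]s1 | rewrite -[RHS]mul1r -[in RHS]s1
           | rewrite -[RHS]mul1r -[in RHS]s2 | rewrite -[RHS]mul1r -[in RHS]s2]; ring.
Qed.

End Solutions.

Section Uniqueness.
Context {R : realType}.
Local Notation pi := (@pi R).
Local Notation A2 := 'rV[R]_4.

Context {thz thw : R} {b1 b2 : bool} {a b g : R} {v : A2}.
Hypotheses (Phi_abg : Phi_angles a b g = v) (tv : target v).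
Hypotheses (hz : 0 < proj_z thz v) (hw : 0 < proj_w thw v).
Hypotheses (cb_sign : 0 < (-1) ^+ b1 * cos b) (sb_sign : 0 < (-1) ^+ b2 * sin b).

Let coords : [/\ cos b * cos (a + g) = c0 v, cos b * sin (a + g) = c1 v,
  - (sin b * sin (a - g)) = c2 v & sin b * cos (a - g) = c3 v].
Proof. by rewrite -Phi_abg /Phi_angles c0_mk4 c1_mk4 c2_mk4 c3_mk4. Qed.

Lemma fibre_cos_beta : cos b = (-1) ^+ b1 * norm_z v.
Proof.
have [z0 z1 _ _] := coords; have [z_gt0 _ _] := target_norms tv.
apply: eq_sign_sqr => //; rewrite /norm_z sqr_sqrtr ?addr_ge0 ?sqr_ge0 // -z0 -z1.
by rewrite !exprMn -mulrDr cos2Dsin2 mulr1.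
Qed.

Lemma fibre_sin_beta : sin b = (-1) ^+ b2 * norm_w v.
Proof.
have [_ _ w2 w3] := coords; have [_ w_gt0 _] := target_norms tv.
apply: eq_sign_sqr => //; rewrite /norm_w sqr_sqrtr ?addr_ge0 ?sqr_ge0 // -w2 -w3.
by rewrite sqrrN !exprMn -mulrDr addrC cos2Dsin2 mulr1.
Qed.

Lemma fibre_beta : mod2pi b (sol_beta b1 b2 v).
Proof.
have [cb sb] := cos_sin_sol_beta b1 b2 tv.
by apply: cos_sin_mod2pi; [rewrite cb fibre_cos_beta | rewrite sb fibre_sin_beta].
Qed.

Lemma fibre_sum : mod2pi (a + g) (sum_angle thz b1 v).
Proof.
have [z0 z1 _ _] := coords; have [z_gt0 _ _] := target_norms tv.
have [cz sz] := cos_sin_arg_z hz; have z_neq0 : norm_z v != 0 by rewrite gt_eqF.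
rewrite /sum_angle; apply: cos_sin_mod2pi;
  rewrite ?cosD_halfturn ?sinD_halfturn; apply: (mulI_sign z_neq0).
  by rewrite -fibre_cos_beta z0 cz.
by rewrite -fibre_cos_beta z1 sz.
Qed.

Lemma fibre_diff : mod2pi (a - g) (diff_angle thw b2 v).
Proof.
have [_ _ w2 w3] := coords; have [_ w_gt0 _] := target_norms tv.
have [cw sw] := cos_sin_arg_w hw; have w_neq0 : norm_w v != 0 by rewrite gt_eqF.
rewrite /diff_angle; apply: cos_sin_mod2pi;
  rewrite ?cosD_halfturn ?sinD_halfturn; apply: (mulI_sign w_neq0).
  by rewrite -fibre_sin_beta w3 cw.
by rewrite -fibre_sin_beta sw -w2 opprK.
Qed.

Lemma fibre_cos_mid_sqr : cos (a - mid_angle thz thw b1 b2 v) ^+ 2 = 1.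
Proof.
set d := a - mid_angle thz thw b1 b2 v.
have : mod2pi (d *+ 2) 0.
  have -> : d *+ 2 = (a + g - sum_angle thz b1 v) + (a - g - diff_angle thw b2 v).
    by rewrite /d /mid_angle; field.
  rewrite -(addr0 0); apply: mod2piD; rewrite mod2pi_sub0;
    [exact: fibre_sum | exact: fibre_diff].
by move=> /mod2pi_cos_sin [c2d _]; move: c2d; rewrite cos_mulr2n cos0; lra.
Qed.

Lemma fibre_cos_mid_neq0 : cos (a - mid_angle thz thw b1 b2 v) != 0.
Proof.
apply/eqP => cos_eq0; have := fibre_cos_mid_sqr.
by rewrite cos_eq0 expr0n /= => /eqP; rewrite eq_sym oner_eq0.
Qed.

Context {e : bool}.
Hypothesis mid_sign : 0 < (-1) ^+ e * cos (a - mid_angle thz thw b1 b2 v).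

(* Since cos (a - mid) = +- 1, its sign fixes a modulo 2 pi. *)
Lemma fibre_alpha : mod2pi a (sol_alpha thz thw b1 b2 e v).
Proof.
rewrite -mod2pi_sub0; apply: cos_eq1_mod2pi.
have -> : a - sol_alpha thz thw b1 b2 e v =
    (a - mid_angle thz thw b1 b2 v) - e%:R * pi by rewrite /sol_alpha; ring.
rewrite cosB_halfturn.
have := @eq_sign_sqr _ false ((-1) ^+ e * cos (a - mid_angle thz thw b1 b2 v)) 1.
by rewrite expr0 !mul1r expr1n exprMn sqrr_sign mul1r fibre_cos_mid_sqr; apply.
Qed.

Lemma fibre_gamma : mod2pi g (sol_gamma thz thw b1 b2 e v).
Proof.
have -> : sol_gamma thz thw b1 b2 e v =
    (sum_angle thz b1 v - sol_alpha thz thw b1 b2 e v) + 2 * (e%:R * pi).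
  by rewrite /sol_gamma /sol_alpha /mid_angle; field.
have -> : g = (a + g - a) + 0 by ring.
apply: mod2piD; first exact: mod2piB fibre_sum fibre_alpha.
by rewrite mod2pi_sym; exact: fullturn_mod2pi.
Qed.

End Uniqueness.

Section ContinuityA2.
Context {R : realType} {X : topologicalType}.
Context {f : X -> 'rV[R]_4} {x : X}.
Hypothesis cf : {for x, continuous f}.

Lemma continuous_c0 : {for x, continuous (fun y => c0 (f y))}.
Proof. by apply: (@continuous_comp _ _ _ f (@c0 R)) => //; exact: coord_continuous. Qed.
Lemma continuous_c1 : {for x, continuous (fun y => c1 (f y))}.
Proof. by apply: (@continuous_comp _ _ _ f (@c1 R)) => //; exact: coord_continuous. Qed.
Lemma continuous_c2 : {for x, continuous (fun y => c2 (f y))}.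
Proof. by apply: (@continuous_comp _ _ _ f (@c2 R)) => //; exact: coord_continuous. Qed.
Lemma continuous_c3 : {for x, continuous (fun y => c3 (f y))}.
Proof. by apply: (@continuous_comp _ _ _ f (@c3 R)) => //; exact: coord_continuous. Qed.

Lemma continuous_norm_z : {for x, continuous (fun y => norm_z (f y))}.
Proof.
apply: (@continuous_comp _ _ _ (fun y => c0 (f y) ^+ 2 + c1 (f y) ^+ 2) Num.sqrt);
  last exact: sqrt_continuous.
by apply: continuousD; apply: continuous_sqr; [exact: continuous_c0 | exact: continuous_c1].
Qed.

Lemma continuous_norm_w : {for x, continuous (fun y => norm_w (f y))}.
Proof.
apply: (@continuous_comp _ _ _ (fun y => c2 (f y) ^+ 2 + c3 (f y) ^+ 2) Num.sqrt);
  last exact: sqrt_continuous.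
by apply: continuousD; apply: continuous_sqr; [exact: continuous_c2 | exact: continuous_c3].
Qed.

Lemma continuous_proj_z th : {for x, continuous (fun y => proj_z th (f y))}.
Proof.
rewrite /proj_z; apply: continuousD; apply: continuousM; try exact: cst_continuous;
  [exact: continuous_c0 | exact: continuous_c1].
Qed.

Lemma continuous_proj_w th : {for x, continuous (fun y => proj_w th (f y))}.
Proof.
rewrite /proj_w; apply: continuousD; apply: continuousM; try exact: cst_continuous;
  [exact: continuous_c3 | apply: continuousN; exact: continuous_c2].
Qed.

Lemma continuous_sol_beta b1 b2 : 0 < norm_z (f x) ->
  {for x, continuous (fun y => sol_beta b1 b2 (f y))}.
Proof.
move=> z_gt0; rewrite /sol_beta; apply: continuousD; first exact: cst_continuous.
apply: continuousM; first exact: cst_continuous.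
apply: continuous_arg_chart; [exact: continuous_norm_z | exact: continuous_norm_w |].
by rewrite cos0 sin0 mul1r mul0r addr0.
Qed.

Context {thz thw : R} (b1 b2 e : bool).
Hypotheses (hz : 0 < proj_z thz (f x)) (hw : 0 < proj_w thw (f x)).

Lemma continuous_sum_angle : {for x, continuous (fun y => sum_angle thz b1 (f y))}.
Proof.
rewrite /sum_angle; apply: continuousD; last exact: cst_continuous.
by apply: continuous_arg_chart => //; [exact: continuous_c0 | exact: continuous_c1].
Qed.

Lemma continuous_diff_angle : {for x, continuous (fun y => diff_angle thw b2 (f y))}.
Proof.
rewrite /diff_angle; apply: continuousD; last exact: cst_continuous.
apply: continuous_arg_chart => //; first exact: continuous_c3.
by apply: continuousN; exact: continuous_c2.
Qed.

Lemma continuous_mid_angle :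
  {for x, continuous (fun y => mid_angle thz thw b1 b2 (f y))}.
Proof.
rewrite /mid_angle; apply: continuousM; last exact: cst_continuous.
by apply: continuousD; [exact: continuous_sum_angle | exact: continuous_diff_angle].
Qed.

Lemma continuous_sol_alpha :
  {for x, continuous (fun y => sol_alpha thz thw b1 b2 e (f y))}.
Proof.
by rewrite /sol_alpha; apply: continuousD; [exact: continuous_mid_angle | exact: cst_continuous].
Qed.

Lemma continuous_sol_gamma :
  {for x, continuous (fun y => sol_gamma thz thw b1 b2 e (f y))}.
Proof.
rewrite /sol_gamma; apply: continuousD; last exact: cst_continuous.
apply: continuousM; last exact: cst_continuous.
apply: continuousD; first exact: continuous_sum_angle.
by apply: continuousN; exact: continuous_diff_angle.
Qed.

End ContinuityA2.

Definition bit (k : nat) (i : 'I_8) : bool := odd (iter k half i).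

Lemma bit_inj {i j : 'I_8} :
  bit 0 i = bit 0 j -> bit 1 i = bit 1 j -> bit 2 i = bit 2 j -> i = j.
Proof.
case: i => [[|[|[|[|[|[|[|[|?]]]]]]]] hi] //;
  case: j => [[|[|[|[|[|[|[|[|?]]]]]]]] hj] //= *; exact: val_inj.
Qed.

Lemma bit_surj (b0 b1 b2 : bool) :
  exists i : 'I_8, [/\ bit 0 i = b0, bit 1 i = b1 & bit 2 i = b2].
Proof.
exists (inord (b0 + 2 * b1 + 4 * b2)); rewrite /bit inordK;
  by case: b0; case: b1; case: b2.
Qed.

Section Cover.
Context {R : realType}.
Local Notation piC := (\pi_(circle R)).
Local Notation A2 := 'rV[R]_4.
Local Notation TR := (set_type (@torus_reg R)).
Local Notation TG := (set_type (@target R)).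

Variables thz thw : R.

Definition chart_nbhd : set TG :=
  [set q | 0 < proj_z thz (\val q) /\ 0 < proj_w thw (\val q)].

Definition sec_point (i : 'I_8) (v : A2) : torus3 R :=
  (piC (sol_alpha thz thw (bit 1 i) (bit 2 i) (bit 0 i) v),
   piC (sol_beta (bit 1 i) (bit 2 i) v),
   piC (sol_gamma thz thw (bit 1 i) (bit 2 i) (bit 0 i) v)).

Lemma sec_point_reg i (q : TG) : torus_reg (sec_point i (\val q)).
Proof.
have tq : target (\val q) := set_valP q; have [z_gt0 w_gt0 _] := target_norms tq.
have [cb sb] := cos_sin_sol_beta (bit 1 i) (bit 2 i) tq.
rewrite /torus_reg /= sin2x sin_ang cos_ang cb sb.
by rewrite !mulf_neq0 ?signr_eq0 ?gt_eqF ?pnatr_eq0.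
Qed.

Definition sec i (q : TG) : TR := exist _ (sec_point i (\val q)) (mem_set (sec_point_reg i q)).

Definition sheet (i : 'I_8) : set TR := [set x |
  [/\ chart_nbhd (Phi_reg x),
      0 < (-1) ^+ bit 1 i * cos (ang (\val x).1.2),
      0 < (-1) ^+ bit 2 i * sin (ang (\val x).1.2) &
      0 < (-1) ^+ bit 0 i *
            cos (ang (\val x).1.1 - mid_angle thz thw (bit 1 i) (bit 2 i) (\val (Phi_reg x)))]].

Lemma open_chart_nbhd : open chart_nbhd.
Proof.
rewrite openE => q [hz hw].
have cz := continuous_proj_z (continuous_set_val q) thz.
have cw := continuous_proj_w (continuous_set_val q) thw.
near=> p; split; near: p.
- exact: near_pos_continuous cz hz.
- exact: near_pos_continuous cw hw.
Unshelve. all: by end_near.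
Qed.

Lemma Phi_reg_sec i q : chart_nbhd q -> Phi_reg (sec i q) = q.
Proof.
move=> [hz hw]; apply: val_inj; rewrite /= PhiE /=.
rewrite (Phi_angles_mod2pi (ang_mod2pi _) (ang_mod2pi _) (ang_mod2pi _)).
exact: Phi_angles_sol (set_valP q) hz hw.
Qed.

Lemma sec_sheet i q : chart_nbhd q -> sheet i (sec i q).
Proof.
move=> hq; have tq : target (\val q) := set_valP q.
have [z_gt0 w_gt0 _] := target_norms tq.
have [cb sb] := cos_sin_sol_beta (bit 1 i) (bit 2 i) tq.
split; rewrite ?Phi_reg_sec //= ?cos_ang ?sin_ang ?cb ?sb ?signrMK //.
rewrite cosB cos_ang sin_ang -cosB /sol_alpha addrAC subrr add0r.
by rewrite -[_ * pi]add0r cosD_halfturn cos0 mulr1 -expr2 sqrr_sign ltr01.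
Qed.

Lemma sec_Phi_reg i x : sheet i x -> sec i (Phi_reg x) = x.
Proof.
move=> [[hz hw] cb_sign sb_sign mid_sign]; apply: val_inj => /=.
have hP : Phi_angles (ang (\val x).1.1) (ang (\val x).1.2) (ang (\val x).2) =
  \val (Phi_reg x) by rewrite /= PhiE.
have tv : target (\val (Phi_reg x)) := set_valP (Phi_reg x).
rewrite [RHS]torus_reprE /sec_point; congr (_, _, _);
  rewrite piC_mod2pi mod2pi_sym.
- exact: (fibre_alpha hP tv hz hw cb_sign sb_sign mid_sign).
- exact: fibre_beta hP tv cb_sign sb_sign.
- exact: (fibre_gamma hP tv hz hw cb_sign sb_sign mid_sign).
Qed.

Lemma sheets_disjoint i j : i != j -> sheet i `&` sheet j = set0.
Proof.
move=> ij; apply/seteqP; split => // x [[_ ci si mi] [_ cj sj mj]].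
have e1 := sign_unique ci cj; have e2 := sign_unique si sj.
rewrite -e1 -e2 in mj; have e0 := sign_unique mi mj.
by move: ij; rewrite (bit_inj e0 e1 e2) eqxx.
Qed.

Lemma sheets_cover : Phi_reg @^-1` chart_nbhd = \bigcup_i sheet i.
Proof.
apply/seteqP; split => x; last by move=> [i _ []].
move=> hU; have [hz hw] := hU; set t := \val x; set v := \val (Phi_reg x).
have [cb sb] : cos (ang t.1.2) != 0 /\ sin (ang t.1.2) != 0.
  have := set_valP x; rewrite /torus_reg /= sin2x => h; split;
    by apply: contra h => /eqP ->; rewrite ?mul0r ?mulr0.
have hP : Phi_angles (ang t.1.1) (ang t.1.2) (ang t.2) = v by rewrite /v /= PhiE.
have tv : target v := set_valP (Phi_reg x).
have cb_sign := sign_pos cb; have sb_sign := sign_pos sb.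
have mid_sign := sign_pos (fibre_cos_mid_neq0 hP tv hz hw cb_sign sb_sign).
have [i [i0 i1 i2]] := bit_surj
  (cos (ang t.1.1 - mid_angle thz thw (cos (ang t.1.2) < 0) (sin (ang t.1.2) < 0) v) < 0)
  (cos (ang t.1.2) < 0) (sin (ang t.1.2) < 0).
by exists i => //; split; rewrite ?i0 ?i1 ?i2.
Qed.

Lemma open_sheet i : open (sheet i).
Proof.
rewrite openE => x [hU cb_sign sb_sign mid_sign]; have [hz hw] := hU.
have ct : {for x, continuous (fun y : TR => \val y)} := continuous_set_val x.
have cPhi : {for x, continuous (fun y : TR => \val (Phi_reg y))}.
  exact: continuous_comp (continuous_Phi_reg x) (continuous_set_val _).
have calpha := continuous_comp ct (continuous_alpha _).
have cbeta := continuous_comp ct (continuous_beta _).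
have cmid := continuous_mid_angle cPhi (bit 1 i) (bit 2 i) hz hw.
have ccb : {for x, continuous (fun y : TR => (-1) ^+ bit 1 i * cos (ang (\val y).1.2))}.
  by apply: continuousM; [exact: cst_continuous | exact: continuous_cos_ang_comp cbeta].
have csb : {for x, continuous (fun y : TR => (-1) ^+ bit 2 i * sin (ang (\val y).1.2))}.
  by apply: continuousM; [exact: cst_continuous | exact: continuous_sin_ang_comp cbeta].
have cmid_sign : {for x, continuous (fun y : TR => (-1) ^+ bit 0 i *
    (cos (ang (\val y).1.1) * cos (mid_angle thz thw (bit 1 i) (bit 2 i) (\val (Phi_reg y))) +
     sin (ang (\val y).1.1) * sin (mid_angle thz thw (bit 1 i) (bit 2 i) (\val (Phi_reg y)))))}.
  apply: continuousM; first exact: cst_continuous.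
  apply: continuousD; apply: continuousM.
  - exact: continuous_cos_ang_comp calpha.
  - exact: (@continuous_comp _ _ _ _ cos x cmid (@continuous_cos _ _)).
  - exact: continuous_sin_ang_comp calpha.
  - exact: (@continuous_comp _ _ _ _ sin x cmid (@continuous_sin _ _)).
rewrite cosB in mid_sign.
have near_U : \forall y \near x, chart_nbhd (Phi_reg y).
  by apply: continuous_Phi_reg; apply: open_nbhs_nbhs; split => //; exact: open_chart_nbhd.
near=> y; split; near: y => //.
- exact: near_pos_continuous ccb cb_sign.
- exact: near_pos_continuous csb sb_sign.
- by apply: filterS (near_pos_continuous cmid_sign mid_sign) => y; rewrite cosB.
Unshelve. all: by end_near.
Qed.

Lemma continuous_sec i : {within chart_nbhd, continuous (sec i)}.
Proof.
rewrite continuous_open_subspace; last exact: open_chart_nbhd.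
move=> q /set_mem [hz hw]; apply: continuous_at_set_type.
have -> : (fun y : TG => set_val (sec i y)) = (fun y => sec_point i (\val y)) by [].
have [z_gt0 _ _] := target_norms (set_valP q); have cq := continuous_set_val q.
apply: continuous_pair; first apply: continuous_pair;
  apply: (continuous_comp _ (@pi_continuous _ _ _)).
- exact: continuous_sol_alpha.
- exact: continuous_sol_beta.
- exact: continuous_sol_gamma.
Qed.

End Cover.

Theorem proposition4p6 (R : realType) :
  exists Phi_reg : set_type (@torus_reg R) -> set_type (@target R),
    (forall t : set_type (@torus_reg R), \val (Phi_reg t) = Phi (\val t)) /\
    n_fold_covering 8 Phi_reg.
Proof.
exists Phi_reg; split => //; split; first exact: continuous_Phi_reg.
move=> q; have [z_gt0 w_gt0 _] := target_norms (set_valP q).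
have [thz hz] : exists th, 0 < proj_z th (\val q).
  apply: exists_arg_chart => -[q0 q1]; move: z_gt0.
  by rewrite /norm_z q0 q1 expr0n addr0 sqrtr0 ltxx.
have [thw hw] : exists th, 0 < proj_w th (\val q).
  apply: exists_arg_chart => -[q3 /eqP]; rewrite oppr_eq0 => /eqP q2; move: w_gt0.
  by rewrite /norm_w q2 q3 expr0n addr0 sqrtr0 ltxx.
exists (chart_nbhd thz thw); split; first exact: open_chart_nbhd.
split; first by split.
exists (sheet thz thw); split; first exact: open_sheet.
split; first exact: sheets_disjoint.
split; first exact: sheets_cover.
move=> i; exists (sec thz thw i); split; first exact: continuous_sec.
by split => [y hy|x]; [split; [exact: sec_sheet | exact: Phi_reg_sec] | exact: sec_Phi_reg].
Qed.
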